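(* Suppose Assumptions 1–3 below hold. Let $x,x'\in\mathrm{Supp}(X_T)$. (a) If $x<x'$ and $U_T$ is locally concave or convex on $[\min(x,\underline x_T(x')),\overline x_T(x')]$, then $$(x'-x)\min\Big\{\tfrac{\Delta^{ATT}(x,\underline x_T(x'))}{\underline x_T(x')-x},\tfrac{\Delta^{ATT}(x,\overline x_T(x'))}{\overline x_T(x')-x}\Big\}\le\Delta^{ATT}(x,x')\le(x'-x)\max\Big\{\tfrac{\Delta^{ATT}(x,\underline x_T(x'))}{\underline x_T(x')-x},\tfrac{\Delta^{ATT}(x,\overline x_T(x'))}{\overline x_T(x')-x}\Big\}.$$ (b) If $U_T$ is locally concave or convex on $[\underline x_T(x),\overline x_T(x)]$, then $$\min\Big\{\tfrac{\Delta^{ATT}(x,\underline x_T(x))}{\underline x_T(x)-x},\tfrac{\Delta^{ATT}(x,\overline x_T(x))}{\overline x_T(x)-x}\Big\}\le\Delta^{AME}(x)\le\max\Big\{\tfrac{\Delta^{ATT}(x,\underline x_T(x))}{\underline x_T(x)-x},\tfrac{\Delta^{ATT}(x,\overline x_T(x))}{\overline x_T(x)-x}\Big\}.$$ The bounds are understood to be infinite when $\underline x_T(x')=-\infty$ or $\overline x_T(x')=+\infty$ (in both cases $x'>x$ and $x'=x$). Assumption 1: for all $t$, $Y_t(x)=g_t(U_t(x))$, where for all $(x,v)\in\mathcal X\times[0,1]$ the conditional distribution of $U_t(x)$ given $V_t=v$ does not depend on $t$. Assumption 2: for all $(x,t)$, $U_t(x)\in\mathbb R$ and $g_t$ is strictly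 increasing; $g_T(y)=y$ for all $y\in\mathrm{Supp}(Y_T)$. Assumption 3: for all $t\in\{1,\dots,T-1\}$ there exists $x_t^*$ with $F_{X_t}(x_t^* )=F_{X_T}(x_t^* )\in(0,1)$.
   Context: Periods $t\in\{1,\dots,T\}$; for each $t$ and $x\in\mathcal X\subset\mathbb R$ a real potential outcome $Y_t(x)$; observed treatment $X_t\in\mathbb R$ and outcome $Y_t=Y_t(X_t)$ (repeated cross-sections). $F_A$ is a cdf, $F_A^{-1}$ the quantile function, $V_t=F_{X_t}(X_t)$, $q_t=F^{-1}_{X_t}\circ F_{X_T}$. $\Delta^{ATT}(x,x')=E[Y_T(x')-Y_T(x)\mid X_T=x]$ and $\Delta^{AME}(x)=E[\frac{dY_T}{dx}(x)\mid X_T=x]$. The map $x\mapsto U_T(x)$ is locally concave or convex on $[a,b]$ if almost surely it is twice differentiable and either $\partial^2U_T/\partial x^2(u)\le0$ for all $u\in[a,b]$ a.s., or $\partial^2U_T/\partial x^2(u)\ge0$ for all $u\in[a,b]$ a.s. For fixed $x$ and for $x'\in\mathrm{Supp}(X_T)$ define $\underline x_T(x')=\max\{q_t(x):t\in\{1,\dots,T-1\},\ q_t(x)\ne x,\ q_t(x)<x'\}$ and $\overline x_T(x')=\min\{q_t(x):t\in\{1,\dots,T-1\},\ q_t(x)\ne x,\ q_t(x)>x'\}$, with $\underline x_T(x')=-\infty$, resp. $\overline x_T(x')=+\infty$, if the set is empty (these depend on $x$ as well). *)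

From HB Require Import structures.
From mathcomp Require Import all_boot all_order all_algebra.
From mathcomp Require Import all_classical all_reals all_analysis.
Set Implicit Arguments. Unset Strict Implicit. Unset Printing Implicit Defensive.
Import Order.TTheory GRing.Theory Num.Theory.
Import numFieldNormedType.Exports.
Local Open Scope classical_set_scope.
Local Open Scope ring_scope.

Section Defs.
Context (R : realType) (d : measure_display) (Omega : measurableType d)
        (P : probability Omega R).

Definition cdf (A : Omega -> R) (y : R) : R := fine (P [set w | A w <= y]).

(* quantile function F_A^{-1}(p) = inf {y | F_A(y) >= p}, in the extended reals
   (= -oo for p = 0, +oo if the set is empty) *)
Definition quantile (A : Omega -> R) (p : R) : \bar R :=
  ereal_inf (EFin @` [set y | p <= cdf A y]).

Definition supp (A : Omega -> R) : set R :=
  [set x | forall e : R, 0 < e -> (0 < P [set w | (`|A w - x| < e)%R])%E].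

Definition Vt (A : Omega -> R) : Omega -> R := fun w => cdf A (A w).

Definition qt (Xt XT : Omega -> R) (x : R) : \bar R := quantile Xt (cdf XT x).

(* underline x_T(x') and overline x_T(x') (depending on x), periods t = 1..T-1;
   max of the empty set is -oo, min of the empty set is +oo *)
Definition x_low (X : nat -> Omega -> R) (T : nat) (x x' : R) : \bar R :=
  \big[maxe/-oo%E]_(1 <= t < T | (qt (X t) (X T) x != x%:E)
                               && (qt (X t) (X T) x < x'%:E)%O) qt (X t) (X T) x.
Definition x_up (X : nat -> Omega -> R) (T : nat) (x x' : R) : \bar R :=
  \big[mine/+oo%E]_(1 <= t < T | (qt (X t) (X T) x != x%:E)
                               && (x'%:E < qt (X t) (X T) x)%O) qt (X t) (X T) x.

(* Pointwise conditional expectation E[Z | A = x], defined canonically as the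
   limit, as h -> 0+, of E[Z 1{|A - x| < h}] / P(|A - x| < h). *)
Definition local_avg (A Z : Omega -> R) (x h : R) : R :=
  Rintegral P [set w | `|A w - x| < h] Z / fine (P [set w | `|A w - x| < h]).
Definition cond_exp (A Z : Omega -> R) (x : R) : R :=
  lim (local_avg A Z x h @[h --> 0^'+]).
Definition cond_exp_defined (A Z : Omega -> R) (x : R) : Prop :=
  P.-integrable setT (EFin \o Z) /\ cvg (local_avg A Z x h @[h --> 0^'+]).

Definition ATT (XT : Omega -> R) (YT : R -> Omega -> R) (x x' : R) : R :=
  cond_exp XT (fun w => YT x' w - YT x w) x.
Definition ATT_defined (XT : Omega -> R) (YT : R -> Omega -> R) (x x' : R) :=
  cond_exp_defined XT (fun w => YT x' w - YT x w) x.

Definition AME (XT : Omega -> R) (YT : R -> Omega -> R) (x : R) : R :=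
  cond_exp XT (fun w => derive1 (fun y => YT y w) x) x.
Definition AME_defined (XT : Omega -> R) (YT : R -> Omega -> R) (x : R) :=
  {ae P, forall w, derivable (fun y => YT y w) x 1}
  /\ cond_exp_defined XT (fun w => derive1 (fun y => YT y w) x) x.

(* x |-> U_T(x) locally concave or convex on [a,b]; U_T is defined on the
   treatment space Xs, so [a,b] must lie in Xs. *)
Definition twice_diff_on (f : R -> R) (a b : R) : Prop :=
  forall u, a <= u <= b -> derivable f u 1 /\ derivable (derive1 f) u 1.
Definition loc_concave_or_convex (Xs : set R) (UT : R -> Omega -> R) (a b : R) :=
  `[a, b] `<=` Xs
  /\ {ae P, forall w, twice_diff_on (fun y => UT y w) a b}
  /\ ({ae P, forall w, forall u, a <= u <= b -> derive1 (derive1 (fun y => UT y w)) u <= 0}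
      \/ {ae P, forall w, forall u, a <= u <= b -> 0 <= derive1 (derive1 (fun y => UT y w)) u}).

(* Assumption 1: Y_t(x) = g_t(U_t(x)) and, for x in Xs, the conditional
   distribution of U_t(x) given V_t = v does not depend on t: a single
   probability kernel kappa is a version of it for every period t. *)
Definition assumption1 (T : nat) (Xs : set R) (X : nat -> Omega -> R)
    (U Y : nat -> R -> Omega -> R) (g : nat -> R -> R) : Prop :=
  (forall t x w, (1 <= t <= T)%N -> Xs x -> Y t x w = g t (U t x w))
  /\ forall x, Xs x -> exists kappa : R.-pker R ~> R,
       forall t, (1 <= t <= T)%N -> forall A B : set R, measurable A -> measurable B ->
         P (U t x @^-1` A `&` Vt (X t) @^-1` B)
         = (\int[P]_(w in Vt (X t) @^-1` B) kappa (Vt (X t) w) A)%E.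

Definition suppYT (T : nat) (Xs : set R) (Y : nat -> R -> Omega -> R) : set R :=
  [set y | exists2 x, Xs x & supp (Y T x) y].

Definition assumption2 (T : nat) (Xs : set R) (Y : nat -> R -> Omega -> R)
    (g : nat -> R -> R) : Prop :=
  (forall t, (1 <= t <= T)%N -> {homo g t : a b / a < b})
  /\ (forall y, suppYT T Xs Y y -> g T y = y).

Definition assumption3 (T : nat) (X : nat -> Omega -> R) : Prop :=
  forall t, (1 <= t < T)%N -> exists xs : R,
    cdf (X t) xs = cdf (X T) xs /\ 0 < cdf (X T) xs < 1.

End Defs.

(* Assumption 2 makes g_T the identity on the support of Y_T, and Y_T(z) lies in
   that support almost surely, so Y_T(z) = U_T(z) a.s. for every fixed z.  If
   U_T is concave (resp. convex) on an interval, its chord slopes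
   z |-> (U_T(z) - U_T(x)) / (z - x) are nonincreasing (resp. nondecreasing) and
   its derivative at x lies between the slopes on either side of x.  The
   direction of monotonicity is the same for almost every outcome, so these
   pointwise inequalities survive conditional expectation, which is monotone and
   homogeneous; this traps Delta^ATT(x,x')/(x'-x) and Delta^AME(x) between the
   slopes Delta^ATT(x,z)/(z-x) at z = x_low and z = x_up.  The kernel part of
   Assumption 1, Assumption 3 and the support conditions on x, x' serve in the
   paper to identify these bounds from the data; the inequalities do not use them. *)

From HB Require Import structures.
From mathcomp Require Import all_boot all_order all_algebra.
From mathcomp Require Import all_classical all_reals all_analysis.
From mathcomp Require Import measurable_realfun ring lra.
Import Order.TTheory GRing.Theory Num.Theory.
Import numFieldNormedType.Exports.
Local Open Scope classical_set_scope.
Local Open Scope ring_scope.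
Set Implicit Arguments. Unset Strict Implicit. Unset Printing Implicit Defensive.

Section RealAnalysis.
Context (R : realType).
Implicit Types (f d : R -> R) (a b p q r x z : R).

Definition slope f x z := (f z - f x) / (z - x).

Lemma slopeC f x z : slope f x z = slope f z x.
Proof. by rewrite /slope -opprB -[z - x]opprB invrN mulrNN. Qed.

Lemma slopeN f x z : slope (- f) x z = - slope f x z.
Proof. by rewrite /slope -mulNr opprB /= opprK addrC. Qed.

Lemma slope_MVT f d p q : p < q ->
  (forall u, p <= u <= q -> is_derive u 1 f (d u)) ->
  exists2 c, p < c < q & slope f p q = d c.
Proof.
move=> pq fd.
have fd' u : u \in `]p, q[ -> is_derive u 1 f (d u).
  by rewrite in_itv => /andP[pu uq]; apply: fd; rewrite !ltW.
have fc : {within `[p, q], continuous f}.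
  by apply: derivable_within_continuous => u /[!in_itv] /fd [].
have [c /[!in_itv] /= cin eqc] := MVT pq fd' fc.
by exists c => //; rewrite /slope eqc mulfK // subr_eq0 gt_eqF.
Qed.

Lemma slope_between f p q r : p < q < r ->
  slope f q r <= slope f p q -> slope f q r <= slope f p r <= slope f p q.
Proof.
move=> /andP[pq qr]; rewrite [slope f p r]/slope.
set s1 := slope f p q; set s2 := slope f q r => s21.
have qp0 : 0 < q - p by rewrite subr_gt0.
have rq0 : 0 < r - q by rewrite subr_gt0.
have rp0 : 0 < r - p by rewrite subr_gt0 (lt_trans pq).
have -> : f r - f p = s1 * (q - p) + s2 * (r - q).
  by rewrite /s1 /s2 /slope !divfK ?gt_eqF //; ring.
rewrite ler_pdivlMr // ler_pdivrMr //.
by apply/andP; split; nra.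
Qed.

Section Nonincreasing.
Variables (f d : R -> R) (a b : R).
Hypothesis fd : forall u, a <= u <= b -> is_derive u 1 f (d u).
Hypothesis d_nonincr : {in `[a, b] &, {homo d : u v /~ u <= v}}.

Lemma slope_chord_le p q r : a <= p -> p < q < r -> r <= b ->
  slope f q r <= slope f p q.
Proof.
move=> ap /andP[pq qr] rb.
have [c1 /andP[pc1 c1q] ->] : exists2 c, p < c < q & slope f p q = d c.
  by apply: slope_MVT => // u /andP[pu uq]; apply: fd; lra.
have [c2 /andP[qc2 c2r] ->] : exists2 c, q < c < r & slope f q r = d c.
  by apply: slope_MVT => // u /andP[qu ur]; apply: fd; lra.
by apply: d_nonincr; rewrite ?in_itv /=; lra.
Qed.

Lemma slope_nonincr x z1 z2 : a <= x <= b -> a <= z1 -> z1 < z2 -> z2 <= b ->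
  z1 != x -> z2 != x -> slope f x z2 <= slope f x z1.
Proof.
move=> /andP[ax xb] az1 z12 z2b z1x z2x.
have [xz1|z1x'|/eqP] := ltgtP x z1; last by rewrite eq_sym (negbTE z1x).
  have xz12 : x < z1 < z2 by rewrite xz1 z12.
  have /andP[_ //] := slope_between xz12 (slope_chord_le ax xz12 z2b).
have [xz2|z2x'|/eqP] := ltgtP x z2; last by rewrite eq_sym (negbTE z2x).
  by rewrite [slope f x z1]slopeC; apply: slope_chord_le => //; rewrite z1x'.
have z12x : z1 < z2 < x by rewrite z12 z2x'.
have /andP[+ _] := slope_between z12x (slope_chord_le az1 z12x xb).
by rewrite ![slope f x _]slopeC.
Qed.

Lemma derive_between_slopes_nonincr lo x up : a <= lo -> lo < x < up -> up <= b ->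
  slope f x up <= d x <= slope f x lo.
Proof.
move=> alo /andP[lox xup] upb.
have [c1 /andP[loc1 c1x] e1] : exists2 c, lo < c < x & slope f lo x = d c.
  by apply: slope_MVT => // u /andP[lou ux]; apply: fd; lra.
have [c2 /andP[xc2 c2up] e2] : exists2 c, x < c < up & slope f x up = d c.
  by apply: slope_MVT => // u /andP[xu uup]; apply: fd; lra.
rewrite [slope f x lo]slopeC e1 e2.
by apply/andP; split; apply: d_nonincr; rewrite ?in_itv /= ?ltW //; lra.
Qed.

End Nonincreasing.

Section Nondecreasing.
Variables (f d : R -> R) (a b : R).
Hypothesis fd : forall u, a <= u <= b -> is_derive u 1 f (d u).
Hypothesis d_nondecr : {in `[a, b] &, {homo d : u v / u <= v}}.

Let fdN u : a <= u <= b -> is_derive u 1 (- f) (- d u).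
Proof. by move=> /fd; apply: is_deriveN. Qed.

Let dN_nonincr : {in `[a, b] &, {homo (fun u => - d u) : u v /~ u <= v}}.
Proof. by move=> u v ui vi uv; rewrite lerN2 d_nondecr. Qed.

Lemma slope_nondecr x z1 z2 : a <= x <= b -> a <= z1 -> z1 < z2 -> z2 <= b ->
  z1 != x -> z2 != x -> slope f x z1 <= slope f x z2.
Proof.
move=> xab az1 z12 z2b z1x z2x.
have := slope_nonincr fdN dN_nonincr xab az1 z12 z2b z1x z2x.
by rewrite !slopeN lerN2.
Qed.

Lemma derive_between_slopes_nondecr lo x up : a <= lo -> lo < x < up -> up <= b ->
  slope f x lo <= d x <= slope f x up.
Proof.
move=> alo loxup upb.
have := derive_between_slopes_nonincr fdN dN_nonincr alo loxup upb.
by rewrite !slopeN !lerN2 andbC.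
Qed.

End Nondecreasing.

Lemma twice_diff_on_is_derive f a b : twice_diff_on f a b ->
  forall u, a <= u <= b -> is_derive u 1 f (derive1 f u).
Proof. by move=> tdf u /tdf[fu _]; rewrite derive1E; exact: derivableP. Qed.

Let twice_diff_on_continuous f a b : twice_diff_on f a b ->
  {within `[a, b], continuous (derive1 f)}.
Proof. by move=> tdf; apply: derivable_within_continuous => u /[!in_itv] /tdf[]. Qed.

Let twice_diff_on_open f a b : twice_diff_on f a b ->
  forall u, u \in `]a, b[ -> derivable (derive1 f) u 1.
Proof. by move=> tdf u /[!in_itv] /andP[au ub]; apply: (tdf u _).2; rewrite !ltW. Qed.

Lemma derive1_nonincr_on f a b : twice_diff_on f a b ->
  (forall u, a <= u <= b -> derive1 (derive1 f) u <= 0) ->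
  {in `[a, b] &, {homo derive1 f : u v /~ u <= v}}.
Proof.
move=> tdf f2; apply: ler0_derive1_le_cc; last exact: twice_diff_on_continuous.
  exact: twice_diff_on_open.
by move=> u /[!in_itv] /andP[au ub]; apply: f2; rewrite !ltW.
Qed.

Lemma derive1_nondecr_on f a b : twice_diff_on f a b ->
  (forall u, a <= u <= b -> 0 <= derive1 (derive1 f) u) ->
  {in `[a, b] &, {homo derive1 f : u v / u <= v}}.
Proof.
move=> tdf f2; apply: ger0_derive1_le_cc; last exact: twice_diff_on_continuous.
  exact: twice_diff_on_open.
by move=> u /[!in_itv] /andP[au ub]; apply: f2; rewrite !ltW.
Qed.

Lemma cvg_diff_quotient f x (u : R^nat) : derivable f x 1 ->
  (forall n, 0 < u n) -> u n @[n --> \oo] --> 0 ->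
  (f (u n + x) - f x) / u n @[n --> \oo] --> derive1 f x.
Proof.
move=> fx u_gt0 u_0.
have fx' : h^-1 *: (f (h + x) - f x) @[h --> 0^'] --> derive1 f x.
  have e : (fun h => h^-1 *: ((f \o shift x) h%:A - f x)) =
           (fun h => h^-1 *: (f (h + x) - f x)).
    by apply: funext => h /=; rewrite -[h%:A]/(h * 1) mulr1.
  by move: fx; rewrite /derivable e.
have := (cvg_at_rightP _ 0 _).1 (cvg_dnbhs_at_right fx') u (conj u_gt0 u_0).
by apply: cvg_trans; apply: near_eq_cvg; near=> n; rewrite /= mulrC.
Unshelve. all: end_near.
Qed.

Lemma derive1_eq_on_seq f g x (u : R^nat) : derivable f x 1 -> derivable g x 1 ->
  (forall n, 0 < u n) -> u n @[n --> \oo] --> 0 ->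
  f x = g x -> (forall n, f (u n + x) = g (u n + x)) -> derive1 f x = derive1 g x.
Proof.
move=> fx gx u_gt0 u_0 fgx fgu.
have fquot_g : (f (u n + x) - f x) / u n @[n --> \oo] --> derive1 g x.
  apply: cvg_trans (cvg_diff_quotient gx u_gt0 u_0); apply: near_eq_cvg.
  by apply: nearW => n; rewrite /= fgx fgu.
exact: cvg_unique (cvg_diff_quotient fx u_gt0 u_0) fquot_g.
Qed.

Lemma grid_approx (y e : R) : 0 < e -> exists (m : nat) (k : int),
  `|y - k%:~R / m.+1%:R| < m.+1%:R^-1 /\ 2 / m.+1%:R < e.
Proof.
move=> e0; set m := Num.Def.trunc (2 / e); set n : R := m.+1%:R.
have n0 : 0 < n by [].
exists m, (Num.Def.floor (y * n)); split; last first.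
  by rewrite ltr_pdivrMr // mulrC -ltr_pdivrMr // truncnS_gt.
rewrite -(ltr_pM2r n0) -[X in _ * X]gtr0_norm // -normrM mulrBl divfK ?gt_eqF //.
rewrite mulVf ?gt_eqF // ger0_norm ?subr_ge0 ?floor_le //.
by rewrite ltrBlDl; have := floorD1_gt (y * n); rewrite rmorphD /= rmorph1 addrC.
Qed.

End RealAnalysis.

Section Measure.
Context (R : realType) (d : measure_display) (Omega : measurableType d)
        (mu : {measure set Omega -> \bar R}).

Lemma ae_forall_countable (I : countType) (Q : I -> Omega -> Prop) :
  (forall i, {ae mu, forall w, Q i w}) -> {ae mu, forall w, forall i, Q i w}.
Proof.
move=> aeQ; suff : {ae mu, forall w, forall n i, pickle i = n -> Q i w}.
  by apply: filterS => w Qw i; exact: Qw _ i erefl.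
apply: ae_foralln => n; case En : (unpickle n) => [i0|].
  by apply: filterS (aeQ i0) => w Qw i ein; move: (pickleK i); rewrite ein En => -[<-].
by apply: aeW => w i ein; move: (pickleK i); rewrite ein En.
Qed.

Lemma Rintegral_ae_le (S : set Omega) (Z1 Z2 : Omega -> R) : measurable S ->
  mu.-integrable S (EFin \o Z1) -> mu.-integrable S (EFin \o Z2) ->
  {ae mu, forall w, Z1 w <= Z2 w} -> Rintegral mu S Z1 <= Rintegral mu S Z2.
Proof.
move=> mS i1 i2 Z12; rewrite -subr_ge0 -RintegralB //.
set h := fun w => Z2 w - Z1 w.
have mh : measurable_fun S h.
  by apply: measurable_funB; apply/measurable_EFinP;
    [case/integrableP: i2 | case/integrableP: i1].
have -> : Rintegral mu S h = Rintegral mu S (fun w => Num.max (h w) 0).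
  congr fine; apply: ae_eq_integral => //.
  - exact/measurable_EFinP.
  - by apply/measurable_EFinP; apply: measurable_maxr => //; exact: measurable_cst.
  - by apply: filterS Z12 => w Z12w _; rewrite /h max_l // subr_ge0.
by apply/fine_ge0/integral_ge0 => w _; rewrite lee_fin le_max lexx orbT.
Qed.

End Measure.

Section Probability.
Context (R : realType) (d : measure_display) (Omega : measurableType d)
        (P : probability Omega R).

Section LocalAverage.
Variables (A : Omega -> R) (mA : measurable_fun setT A).

Lemma measurable_dist_lt x h : measurable [set w | `|A w - x| < h].
Proof.
have mdist : measurable_fun setT (fun w => `|A w - x|).
  by apply: measurableT_comp => //; exact: measurable_funB.
rewrite -[X in measurable X]setTI.
have -> : [set w | `|A w - x| < h] = (fun w => `|A w - x|) @^-1` `]-oo, h[.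
  by apply/seteqP; split => w /=; rewrite in_itv.
exact: mdist.
Qed.

Let ball_integrable (Z : Omega -> R) (x h : R) : P.-integrable setT (EFin \o Z) ->
  P.-integrable [set w | `|A w - x| < h] (EFin \o Z).
Proof. exact: integrableS (measurable_dist_lt x h) (@subsetT _ _). Qed.

Lemma local_avg_ae_le (Z1 Z2 : Omega -> R) x h :
  P.-integrable setT (EFin \o Z1) -> P.-integrable setT (EFin \o Z2) ->
  {ae P, forall w, Z1 w <= Z2 w} -> local_avg P A Z1 x h <= local_avg P A Z2 x h.
Proof.
move=> i1 i2 Z12; rewrite /local_avg ler_wpM2r ?invr_ge0 ?fine_ge0 //.
exact: Rintegral_ae_le (measurable_dist_lt x h) (ball_integrable _ _ i1)
  (ball_integrable _ _ i2) Z12.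
Qed.

Lemma local_avgZ c (Z : Omega -> R) x h : P.-integrable setT (EFin \o Z) ->
  local_avg P A (fun w => c * Z w) x h = c * local_avg P A Z x h.
Proof.
by move=> iZ; rewrite /local_avg RintegralZl ?mulrA // ?ball_integrable //;
  exact: measurable_dist_lt.
Qed.

Lemma cond_exp_definedZ c (Z : Omega -> R) x : cond_exp_defined P A Z x ->
  cond_exp_defined P A (fun w => c * Z w) x.
Proof.
move=> [iZ cZ]; split.
  exact: eq_integrable (integrableZl measurableT c iZ).
rewrite (eq_fun (fun h => local_avgZ c x h iZ)).
exact: is_cvgZl_tmp.
Qed.

Lemma cond_expZ c (Z : Omega -> R) x : cond_exp_defined P A Z x ->
  cond_exp P A (fun w => c * Z w) x = c * cond_exp P A Z x.
Proof.
move=> [iZ cZ]; rewrite /cond_exp (eq_fun (fun h => local_avgZ c x h iZ)).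
exact: limZl_tmp.
Qed.

Lemma cond_exp_ae_le (Z1 Z2 : Omega -> R) x :
  cond_exp_defined P A Z1 x -> cond_exp_defined P A Z2 x ->
  {ae P, forall w, Z1 w <= Z2 w} -> cond_exp P A Z1 x <= cond_exp P A Z2 x.
Proof.
move=> [i1 c1] [i2 c2] Z12; apply: ler_lim => //.
by near=> h; exact: local_avg_ae_le.
Unshelve. all: end_near.
Qed.

Lemma cond_exp_between (Z1 Z2 Z3 : Omega -> R) x :
  cond_exp_defined P A Z1 x -> cond_exp_defined P A Z2 x -> cond_exp_defined P A Z3 x ->
  {ae P, forall w, Z1 w <= Z2 w <= Z3 w} \/ {ae P, forall w, Z3 w <= Z2 w <= Z1 w} ->
  Num.min (cond_exp P A Z1 x) (cond_exp P A Z3 x) <= cond_exp P A Z2 x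
    <= Num.max (cond_exp P A Z1 x) (cond_exp P A Z3 x).
Proof.
move=> d1 d2 d3 chains.
wlog chain : Z1 Z3 d1 d3 chains / {ae P, forall w, Z1 w <= Z2 w <= Z3 w}.
  move=> ordered; case: (chains) => chain; first exact: ordered chain.
  by rewrite minC maxC; exact: ordered d3 d1 (or_introl chain) chain.
have le12 : cond_exp P A Z1 x <= cond_exp P A Z2 x.
  by apply: cond_exp_ae_le d1 d2 _; apply: filterS chain => w /andP[].
have le23 : cond_exp P A Z2 x <= cond_exp P A Z3 x.
  by apply: cond_exp_ae_le d2 d3 _; apply: filterS chain => w /andP[].
by rewrite ge_min le_max le12 le23 orbT.
Qed.

End LocalAverage.

Lemma ae_in_supp (A : Omega -> R) : measurable_fun setT A ->
  {ae P, forall w, supp P A (A w)}.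
Proof.
move=> mA.
(* Every ball around a point outside the support contains a null ball of some
   grid (m.+1)^-1 * Z, and there are countably many of those. *)
pose B (i : nat * int) := [set w | `|A w - i.2%:~R / i.1.+1%:R| < i.1.+1%:R^-1].
have mB i : measurable (B i) by exact: measurable_dist_lt.
have : {ae P, forall w, forall i, P (B i) = 0%E -> ~ B i w}.
  apply: ae_forall_countable => i.
  have [PBi0|PBi] := eqVneq (P (B i)) 0%E.
    by exists (B i); split => // w /= nBw; apply: contrapT => Bw; exact: nBw.
  by apply: aeW => w /eqP; rewrite (negbTE PBi).
apply: filterS => w null_grid e e0.
rewrite lt_neqAle measure_ge0 andbT eq_sym; apply/negP => /eqP Pe0.
have [m [k [Bw me]]] := grid_approx (A w) e0.
have grid_sub : B (m, k) `<=` [set w' | `|A w' - A w| < e].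
  move=> w'; rewrite /B /= => Bw'; apply: le_lt_trans me.
  rewrite -(subrK (k%:~R / m.+1%:R) (A w')) -addrA (le_trans (ler_normD _ _)) //.
  rewrite distrC in Bw; set r := m.+1%:R^-1 in Bw Bw' *; lra.
apply: null_grid (m, k) _ Bw.
exact: subset_measure0 (mB _) (measurable_dist_lt mA _ _) grid_sub Pe0.
Qed.

End Probability.

Lemma big_selective_witness (T : eqType) (I : Type) (op : T -> T -> T) (idx : T)
    (r : seq I) (Pr : pred I) (F : I -> T) v :
  (forall a b, op a b = a \/ op a b = b) ->
  \big[op/idx]_(i <- r | Pr i) F i = v -> v != idx -> exists2 i, Pr i & F i = v.
Proof.
move=> op_sel <-; apply: (big_ind (fun y => y != idx -> exists2 i, Pr i & F i = y)).
- by rewrite eqxx.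
- by move=> a b Ha Hb; case: (op_sel a b) => ->.
- by move=> i Pi _; exists i.
Qed.

Section PotentialOutcomes.
Context (R : realType) (d : measure_display) (Omega : measurableType d)
        (P : probability Omega R).

Lemma x_low_spec (X : nat -> Omega -> R) T x x' lo :
  x_low P X T x x' = lo%:E -> lo < x' /\ lo != x.
Proof.
have max_sel (a b : \bar R) : maxe a b = a \/ maxe a b = b.
  by rewrite /Order.max; case: ifP; [right | left].
move=> /(big_selective_witness max_sel) /(_ isT) [t /andP[t_ne t_lt] t_eq].
by rewrite t_eq lte_fin in t_lt; rewrite t_eq eqe in t_ne.
Qed.

Lemma x_up_spec (X : nat -> Omega -> R) T x x' up :
  x_up P X T x x' = up%:E -> x' < up /\ up != x.
Proof.
have min_sel (a b : \bar R) : mine a b = a \/ mine a b = b.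
  by rewrite /Order.min; case: ifP; [left | right].
move=> /(big_selective_witness min_sel) /(_ isT) [t /andP[t_ne t_lt] t_eq].
by rewrite t_eq lte_fin in t_lt; rewrite t_eq eqe in t_ne.
Qed.

Lemma outcome_eq_latent T (Xs : set R) (X : nat -> Omega -> R)
    (U Y : nat -> R -> Omega -> R) (g : nat -> R -> R) z : (1 <= T)%N ->
  assumption1 P T Xs X U Y g -> assumption2 P T Xs Y g ->
  measurable_fun setT (U T z) -> Xs z -> {ae P, forall w, Y T z w = U T z w}.
Proof.
move=> T1 [Y_gU _] [g_incr gT_id] mU Xz.
have TT : (1 <= T <= T)%N by rewrite T1 leqnn.
have {g_incr} gT_incr := g_incr T TT.
have YTz : Y T z = g T \o U T z by apply: funext => w; exact: Y_gU.
have mY : measurable_fun setT (Y T z).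
  rewrite YTz; apply: measurableT_comp mU; apply: nondecreasing_measurable => //.
  by move=> a b; rewrite le_eqVlt => /predU1P[-> // | /gT_incr/ltW].
apply: filterS (ae_in_supp P mY) => w Yw_supp.
apply: (mono_inj lexx le_anti (le_mono gT_incr)).
by rewrite gT_id; [rewrite YTz | exists z].
Qed.

Section Bounds.
Variables (XT : Omega -> R) (Xs : set R) (YT UT : R -> Omega -> R).
Hypothesis mXT : measurable_fun setT XT.
Hypothesis YT_UT : forall z, Xs z -> {ae P, forall w, YT z w = UT z w}.

Let sY x z w := slope (YT^~ w) x z.
Let sU x z w := slope (UT^~ w) x z.

Lemma cond_exp_slope x z : ATT_defined P XT YT x z ->
  cond_exp_defined P XT (sY x z) x
  /\ cond_exp P XT (sY x z) x = ATT P XT YT x z / (z - x).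
Proof.
have -> : sY x z = fun w => (z - x)^-1 * (YT z w - YT x w).
  by apply: funext => w; rewrite /sY /slope mulrC.
by move=> dz; split; [exact: cond_exp_definedZ | rewrite cond_expZ // mulrC].
Qed.

Lemma ae_slope_eq x z : Xs x -> Xs z -> {ae P, forall w, sY x z w = sU x z w}.
Proof.
move=> Xx Xz; apply: filterS2 (YT_UT Xx) (YT_UT Xz) => w YUx YUz.
by rewrite /sY /sU /slope YUx YUz.
Qed.

Lemma ATT_slope_between x x' lo up : lo < x' -> x < x' < up -> lo != x ->
  loc_concave_or_convex P Xs UT (Num.min x lo) up ->
  ATT_defined P XT YT x x' -> ATT_defined P XT YT x lo -> ATT_defined P XT YT x up ->
  Num.min (ATT P XT YT x lo / (lo - x)) (ATT P XT YT x up / (up - x))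
    <= ATT P XT YT x x' / (x' - x)
    <= Num.max (ATT P XT YT x lo / (lo - x)) (ATT P XT YT x up / (up - x)).
Proof.
move=> lox' /andP[xx' x'up] lonx [sub [td cc]] dx' dlo dup.
have [dsx' <-] := cond_exp_slope dx'; have [dslo <-] := cond_exp_slope dlo.
have [dsup <-] := cond_exp_slope dup.
have [ax alo] : Num.min x lo <= x /\ Num.min x lo <= lo by rewrite !ge_min !lexx orbT.
have inXs z : Num.min x lo <= z <= up -> Xs z.
  by move=> zin; apply: sub; rewrite /= in_itv.
have Xx : Xs x by apply: inXs; apply/andP; split; lra.
have Xx' : Xs x' by apply: inXs; apply/andP; split; lra.
have Xlo : Xs lo by apply: inXs; apply/andP; split; lra.
have Xup : Xs up by apply: inXs; apply/andP; split; lra.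
have x'x : x' != x by rewrite gt_eqF.
have upx : up != x by rewrite gt_eqF //; lra.
have slopes_eq : {ae P, forall w,
    [/\ sY x lo w = sU x lo w, sY x x' w = sU x x' w & sY x up w = sU x up w]}.
  by apply: filterS3 (ae_slope_eq Xx Xlo) (ae_slope_eq Xx Xx') (ae_slope_eq Xx Xup).
apply: cond_exp_between => //.
case: cc => cc; [right | left]; apply: filterS3 slopes_eq td cc => w [-> -> ->] tw cw;
  rewrite /sU.
- have fd := twice_diff_on_is_derive tw; have d_nonincr := derive1_nonincr_on tw cw.
  by apply/andP; split; apply: (slope_nonincr fd d_nonincr) => //; lra.
- have fd := twice_diff_on_is_derive tw; have d_nondecr := derive1_nondecr_on tw cw.
  by apply/andP; split; apply: (slope_nondecr fd d_nondecr) => //; lra.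
Qed.

Lemma AME_between x lo up : lo < x < up ->
  loc_concave_or_convex P Xs UT lo up ->
  AME_defined P XT YT x -> ATT_defined P XT YT x lo -> ATT_defined P XT YT x up ->
  Num.min (ATT P XT YT x lo / (lo - x)) (ATT P XT YT x up / (up - x))
    <= AME P XT YT x
    <= Num.max (ATT P XT YT x lo / (lo - x)) (ATT P XT YT x up / (up - x)).
Proof.
move=> /andP[lox xup] [sub [td cc]] [Yx' dAME] dlo dup.
have [dslo <-] := cond_exp_slope dlo; have [dsup <-] := cond_exp_slope dup.
have inXs z : lo <= z <= up -> Xs z by move=> zin; apply: sub; rewrite /= in_itv.
have Xx : Xs x by apply: inXs; apply/andP; split; lra.
have Xlo : Xs lo by apply: inXs; apply/andP; split; lra.
have Xup : Xs up by apply: inXs; apply/andP; split; lra.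
(* Y_T = U_T is only known a.s. at each fixed point, so the two derivatives at x
   are compared along the countable sequence x + u n. *)
pose u n : R := (up - x) / 2 * harmonic n.
have u_gt0 n : 0 < u n by rewrite mulr_gt0 ?harmonic_gt0 // divr_gt0 // subr_gt0.
have u_0 : u n @[n --> \oo] --> 0.
  rewrite -(mulr0 ((up - x) / 2)).
  by apply: cvgM; [exact: cvg_cst | exact: cvg_harmonic].
have Xu n : Xs (u n + x).
  have : harmonic n <= 1 :> R by rewrite /= invf_le1 ?ler1n.
  by move=> hle1; apply: inXs; have := u_gt0 n; rewrite /u; nra.
have YU_at_x : {ae P, forall w,
    YT x w = UT x w /\ forall n, YT (u n + x) w = UT (u n + x) w}.
  by apply: filterS2 (YT_UT Xx) (ae_foralln (fun n => YT_UT (Xu n))) => w.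
have derive_eq : {ae P, forall w, derive1 (YT^~ w) x = derive1 (UT^~ w) x}.
  apply: filterS3 Yx' td YU_at_x => w Yx tw [YUx YUu].
  by apply: derive1_eq_on_seq Yx _ u_gt0 u_0 YUx YUu; apply: (tw x _).1; lra.
have slopes_eq : {ae P, forall w, [/\ sY x lo w = sU x lo w,
    derive1 (YT^~ w) x = derive1 (UT^~ w) x & sY x up w = sU x up w]}.
  by apply: filterS3 (ae_slope_eq Xx Xlo) derive_eq (ae_slope_eq Xx Xup) => w.
apply: cond_exp_between => //.
case: cc => cc; [right | left]; apply: filterS3 slopes_eq td cc => w [-> -> ->] tw cw;
  rewrite /sU.
- apply: (derive_between_slopes_nonincr (twice_diff_on_is_derive tw)) => //.
    exact: derive1_nonincr_on tw cw.
  by rewrite lox xup.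
- apply: (derive_between_slopes_nondecr (twice_diff_on_is_derive tw)) => //.
    exact: derive1_nondecr_on tw cw.
  by rewrite lox xup.
Qed.

End Bounds.
End PotentialOutcomes.

Theorem theorem3 (R : realType) (d : measure_display) (Omega : measurableType d)
    (P : probability Omega R) (T : nat) (Xs : set R)
    (X : nat -> Omega -> R) (U Y : nat -> R -> Omega -> R) (g : nat -> R -> R) :
  (1 <= T)%N ->
  (forall t, (1 <= t <= T)%N -> measurable_fun setT (X t)) ->
  (forall t w, (1 <= t <= T)%N -> Xs (X t w)) ->
  (forall t x, (1 <= t <= T)%N -> Xs x -> measurable_fun setT (U t x)) ->
  assumption1 P T Xs X U Y g ->
  assumption2 P T Xs Y g ->
  assumption3 P T X ->
  forall x x' : R, supp P (X T) x -> supp P (X T) x' ->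
  (* (a) *)
  (forall lo up : R, x < x' ->
     x_low P X T x x' = lo%:E -> x_up P X T x x' = up%:E ->
     loc_concave_or_convex P Xs (U T) (Num.min x lo) up ->
     ATT_defined P (X T) (Y T) x x' ->
     ATT_defined P (X T) (Y T) x lo -> ATT_defined P (X T) (Y T) x up ->
     (x' - x) * Num.min (ATT P (X T) (Y T) x lo / (lo - x))
                        (ATT P (X T) (Y T) x up / (up - x))
       <= ATT P (X T) (Y T) x x'
     /\ ATT P (X T) (Y T) x x'
       <= (x' - x) * Num.max (ATT P (X T) (Y T) x lo / (lo - x))
                             (ATT P (X T) (Y T) x up / (up - x)))
  /\
  (* (b) *)
  (forall lo up : R,
     x_low P X T x x = lo%:E -> x_up P X T x x = up%:E ->
     loc_concave_or_convex P Xs (U T) lo up ->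
     AME_defined P (X T) (Y T) x ->
     ATT_defined P (X T) (Y T) x lo -> ATT_defined P (X T) (Y T) x up ->
     Num.min (ATT P (X T) (Y T) x lo / (lo - x))
             (ATT P (X T) (Y T) x up / (up - x))
       <= AME P (X T) (Y T) x
     /\ AME P (X T) (Y T) x
       <= Num.max (ATT P (X T) (Y T) x lo / (lo - x))
                  (ATT P (X T) (Y T) x up / (up - x))).
Proof.
move=> T1 mX _ mU A1 A2 _ x x' _ _.
have TT : (1 <= T <= T)%N by rewrite T1 leqnn.
have YT_UT z : Xs z -> {ae P, forall w, Y T z w = U T z w}.
  by move=> Xz; exact: outcome_eq_latent T1 A1 A2 (mU T z TT Xz) Xz.
split.
- move=> lo up xx' /x_low_spec[lox' lonx] /x_up_spec[x'up _] cc dx' dlo dup.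
  have xx'up : x < x' < up by rewrite xx' x'up.
  have := ATT_slope_between (mX T TT) YT_UT lox' xx'up lonx cc dx' dlo dup.
  rewrite ler_pdivlMr ?ler_pdivrMr ?subr_gt0 // => /andP[lb ub].
  by split; rewrite mulrC.
- move=> lo up /x_low_spec[lox _] /x_up_spec[xup _] cc dAME dlo dup.
  have loxup : lo < x < up by rewrite lox xup.
  by have /andP := AME_between (mX T TT) YT_UT loxup cc dAME dlo dup.
Qed.
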